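(* Consider the greedy algorithm (described in the context) run on a finite principal left ideal ring $R$ with a respectful order $<$, an ordered basis $B$ of $R^n$ and a left multiplicative property $P$ on $R^n$. Then each set $C_i$ ($0\le i\le n$) produced by the algorithm is a left $R$-submodule of $R^n$, and $P[x]$ is true for every nonzero $x\in C_i$.
   Context: $R$ is a finite principal left ideal ring with unit group $R^\ast$; codes are left submodules of $R^n$. A property $P:R^n\to\{\text{true},\text{false}\}$ is left multiplicative if $P[ux]=P[x]$ for all $u\in R^\ast$, $x\in R^n$. A total order $<$ on $R$ is respectful if for all nonzero $x,y\in R$ with $Rx\supsetneq Ry$ there is $\alpha\in R^\ast$ with $\alpha x<uy$ for all $u\in R^\ast$. Fix an ordered basis $B=(b_1,\dots,b_n)$ of the free left module $R^n$; put $V_0=\{0\}$ and $V_i=Rb_1+\dots+Rb_i$. The lexicographic order on $R^n$: if $x\in V_{i-1}$ and $y\in V_i\setminus V_{i-1}$ then $x<y$; if $x\ne y$ both lie in the level set $V_i\setminus V_{i-1}$, write $x=\sum_{j\le i}x_jb_j$, $y=\sum_{j\le i}y_jb_j$, let $k$ be the largest index with $x_k\ne y_k$, and set $x<y$ iff $x_k<y_k$ in $R$. Fix a set $\Gamma\subseteq R$ containing one generator of each nonzero left ideal of $R$. Greedy algorithm: $C_0=\{0\}$; for $i=1,\dots,n$, let $a_i$ be the smallest vector of $V_i\setminus V_{i-1}$ (if any) such that $P[\gamma a_i+c]$ is true for all $\gamma\in\Gamma$ and all $c\in C_{i-1}$; if such $a_i$ exists set $C_i=Ra_i+C_{i-1}$,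 otherwise $C_i=C_{i-1}$. The output $C_n$ is the lexicode $C(<,B,P)$. *)

From HB Require Import structures.
From mathcomp Require Import all_boot all_order all_algebra.
Set Implicit Arguments. Unset Strict Implicit. Unset Printing Implicit Defensive.
Import GRing.Theory.
Local Open Scope ring_scope.

Section Lexicodes.
Variable R : finUnitRingType.

Definition lideal (I : {set R}) : Prop :=
  [/\ 0 \in I, (forall x y, x \in I -> y \in I -> x + y \in I)
    & (forall r x, x \in I -> r * x \in I)].

Definition lprinc (x : R) : {set R} := [set r * x | r in [set: R]].

Definition PLIR : Prop := forall I, lideal I -> exists g : R, I = lprinc g.

Definition strict_total (lt : rel R) : Prop :=
  [/\ (forall x, ~~ lt x x), (forall x y z, lt x y -> lt y z -> lt x z)
    & (forall x y, x != y -> lt x y || lt y x)].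

Definition respectful (lt : rel R) : Prop :=
  forall x y : R, x != 0 -> y != 0 -> lprinc y \proper lprinc x ->
    exists2 alpha, alpha \is a GRing.unit &
      forall u, u \is a GRing.unit -> lt (alpha * x) (u * y).

Variable n : nat.
Notation vec := 'rV[R]_n.

Definition lsubmod (C : {set vec}) : Prop :=
  [/\ 0 \in C, (forall x y, x \in C -> y \in C -> x + y \in C)
    & (forall (r : R) x, x \in C -> r *: x \in C)].

Definition left_mult (P : vec -> bool) : Prop :=
  forall u x, u \is a GRing.unit -> P (u *: x) = P x.

(* b (indices 0..n-1 standing for b_1..b_n) is a basis of the free module R^n. *)
Definition is_basis (b : 'I_n -> vec) : Prop :=
  forall x : vec, exists! c : {ffun 'I_n -> R}, x = \sum_j c j *: b j.

Variable b : 'I_n -> vec.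

(* x lies in V_i = R b_1 + ... + R b_i (0-based: span of b j with j < i). *)
Definition inV (i : nat) (x : vec) : bool :=
  [exists c : {ffun 'I_n -> R},
     (x == \sum_j c j *: b j) && [forall j : 'I_n, (i <= j)%N ==> (c j == 0)]].

Variable lt : rel R.

Definition lexlt (x y : vec) : bool :=
  (* x in V_{i-1}, y in V_i \ V_{i-1} *)
  [exists i : 'I_n.+1, inV i x && ~~ inV i y]
  ||
  (* same level set, compare at the largest differing coordinate *)
  ([exists i : 'I_n.+1, [&& (0 < i)%N, inV i x, ~~ inV i.-1 x, inV i y & ~~ inV i.-1 y]]
   && (x != y) &&
   [exists cx : {ffun 'I_n -> R}, exists cy : {ffun 'I_n -> R},
     [&& x == \sum_j cx j *: b j, y == \sum_j cy j *: b j &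
      [exists k : 'I_n, lt (cx k) (cy k) &&
         [forall j : 'I_n, (k < j)%N ==> (cx j == cy j)]]]]).

Variable P : vec -> bool.
Variable Gamma : {set R}.

Fixpoint greedy (i : nat) : {set vec} :=
  match i with
  | O => [set 0]
  | i'.+1 =>
      let Cp := greedy i' in
      let S := [set a | [&& inV i'.+1 a, ~~ inV i' a &
                  [forall g in Gamma, [forall c in Cp, P (g *: a + c)]]]] in
      match [pick a in S | [forall y in S, (y != a) ==> lexlt a y]] with
      | Some a => [set r *: a + c | r in [set: R], c in Cp]
      | None => Cp
      end
  end.

End Lexicodes.

(* If [C] is a submodule on which [P] holds off zero, and [P (g a + c)] holds
   for [g] in [Gamma] and [c] in [C], then [P] holds on the nonzero elements
   [r a + c] of [R a + C]: pick [g] in [Gamma] with [R g = R r]; in a finite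
   ring this forces [r = u g] with [u] a unit, so [r a + c = u (g a + u^-1 c)].
   For the associate lemma write [x = s y], [y = t x]. Powers [e] of [st] and
   [e'] of [ts] are idempotents with [R e ~= R e'] and [e x = x]. The number of
   elements killed by a left ideal [J] is multiplicative along
   [R = R e (+) R (1 - e)], so these numbers agree on [R (1 - e)] and
   [R (1 - e')]; by Moebius inversion over annihilators some [m] in [R (1 - e)]
   has the annihilator of [1 - e'], and [q + m] (with [q] the map
   [R e -> R e']) is a unit carrying [x] to [y]. *)

From HB Require Import structures.
From mathcomp Require Import all_boot all_order all_algebra zify.
Set Implicit Arguments. Unset Strict Implicit. Unset Printing Implicit Defensive.
Import GRing.Theory.
Local Open Scope ring_scope.

Section FiniteRing.
Variable R : finUnitRingType.
Implicit Types (c e p q s t u x y : R) (J K M : {set R}).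

Lemma lprincP x y : reflect (exists s, x = s * y) (x \in lprinc y).
Proof.
by apply: (iffP imsetP) => [[s _ ->]|[s ->]]; exists s; rewrite ?inE.
Qed.

Lemma lprinc_id x : x \in lprinc x.
Proof. by apply/lprincP; exists 1; rewrite mul1r. Qed.

Lemma lprinc_lideal x : lideal (lprinc x).
Proof.
split=> [|_ _ /lprincP[s ->] /lprincP[s' ->]|r _ /lprincP[s ->]]; apply/lprincP.
- by exists 0; rewrite mul0r.
- by exists (s + s'); rewrite mulrDl.
- by exists (r * s); rewrite mulrA.
Qed.

Lemma mem_lprinc_idem e m : e * e = e -> (m \in lprinc e) = (m * e == m).
Proof.
move=> ee; apply/lprincP/eqP => [[s ->]|<-]; last by exists m.
by rewrite -mulrA ee.
Qed.

Lemma rreg_unit u : GRing.rreg u -> u \is a GRing.unit.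
Proof.
have left_inv (w : R) : GRing.rreg w -> exists v, v * w = 1.
  by move=> reg_w; exists (invF reg_w 1); rewrite [LHS](f_invF reg_w).
move=> reg_u; have [v vu] := left_inv u reg_u.
have reg_v : GRing.rreg v.
  by move=> z1 z2 /(congr1 ( *%R^~ u)) /=; rewrite -!mulrA vu !mulr1.
have [w wv] := left_inv v reg_v.
have wu : w = u by rewrite -[w]mulr1 -vu mulrA wv mul1r.
by apply/unitrP; exists v; split; last rewrite -wu.
Qed.

Lemma exprS_idem e k : e * e = e -> e ^+ k.+1 = e.
Proof. by move=> ee; elim: k => // k IH; rewrite exprS IH ee. Qed.

Lemma idem_subr e : e * e = e -> (1 - e) * (1 - e) = 1 - e.
Proof. by move=> ee; rewrite mulrBl mul1r mulrBr mulr1 ee subrr subr0. Qed.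

Lemma exists_idem_expr c : exists2 m, (0 < m)%N & c ^+ m * c ^+ m = c ^+ m.
Proof.
have [i [d [d_gt0 c_id]]] : exists i d, (0 < d)%N /\ c ^+ (i + d) = c ^+ i.
  have /injectivePn[i [j neq_ij eq_ij]] : ~~ injectiveb (fun k : 'I_#|R|.+1 => c ^+ k).
    by apply/injectiveP => /leq_card; rewrite card_ord ltnn.
  case: (ltngtP i j) neq_ij => [lt_ij|lt_ji|/val_inj->]; rewrite ?eqxx // => _.
    by exists i, (j - i)%N; rewrite subn_gt0 subnKC ?(ltnW lt_ij).
  by exists j, (i - j)%N; rewrite subn_gt0 subnKC ?(ltnW lt_ji).
have c_period j k : c ^+ (i + k + d * j) = c ^+ (i + k).
  elim: j => [|j IH]; first by rewrite muln0 addn0.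
  have -> : (i + k + d * j.+1 = i + d + (k + d * j))%N by lia.
  by rewrite exprD c_id -exprD addnA IH.
exists (d * i.+1)%N; first by rewrite muln_gt0 d_gt0.
have le_i : (i <= d * i.+1)%N by rewrite (leq_trans (leqnSn i)) // leq_pmull.
rewrite -exprD.
have -> : (d * i.+1 + d * i.+1 = i + (d * i.+1 - i) + d * i.+1)%N by lia.
by rewrite c_period subnKC.
Qed.

Lemma expr_idem_mul c m j : c ^+ m * c ^+ m = c ^+ m -> c ^+ (m * j.+1) = c ^+ m.
Proof. by move=> cc; rewrite exprM exprS_idem. Qed.

Lemma intertwine_expr t (a b : R) : t * a = b * t -> forall k, t * a ^+ k = b ^+ k * t.
Proof.
move=> tab; elim=> [|k IH]; first by rewrite !expr0 mulr1 mul1r.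
by rewrite !exprS mulrA tab -mulrA IH mulrA.
Qed.

(* [p] and [q] realize [R e ~= R e'] by right multiplications. *)
Definition iso_idem e (e' : R) p q := [/\ p * q = e, q * p = e', p * e' = p & q * e = q].

Lemma iso_idem_sym e (e' : R) p q : iso_idem e e' p q -> iso_idem e' e q p.
Proof. by case=> pq qp pe' qe; split. Qed.

Lemma iso_idem_idem e (e' : R) p q : iso_idem e e' p q -> e * e = e.
Proof. by case=> <- qp pe' _; rewrite mulrA -(mulrA p) qp pe'. Qed.

Lemma fitting_iso_idem x y s t : x = s * y -> y = t * x ->
  exists e e' p q, [/\ iso_idem e e' p q, e * x = x & q * x = y].
Proof.
move=> xsy ytx; pose a := s * t; pose b := t * s.
have [k idem_a idem_b] :
    exists2 k, a ^+ k.+1 * a ^+ k.+1 = a ^+ k.+1 & b ^+ k.+1 * b ^+ k.+1 = b ^+ k.+1.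
  have [[ma ma_gt0 idem_ma] [mb mb_gt0 idem_mb]] := (exists_idem_expr a, exists_idem_expr b).
  case: ma ma_gt0 idem_ma => // ma _ idem_ma; case: mb mb_gt0 idem_mb => // mb _ idem_mb.
  exists (ma.+1 * mb.+1).-1; rewrite prednK ?muln_gt0 //.
    by rewrite expr_idem_mul.
  by rewrite mulnC expr_idem_mul.
set e := a ^+ k.+1; set e' := b ^+ k.+1.
have t_e : t * e = e' * t by apply: intertwine_expr; rewrite !mulrA.
have t_ak : t * a ^+ k = b ^+ k * t by apply: intertwine_expr; rewrite !mulrA.
have s_e' : s * e' = e * s by apply: intertwine_expr; rewrite !mulrA.
have a_x j : a ^+ j * x = x.
  by elim: j => [|j IH]; rewrite ?mul1r // exprSr -mulrA -(mulrA s) -ytx -xsy.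
(* [q] inverts [p] because [a * a ^+ k = e]. *)
exists e, e', (s * e'), (t * a ^+ k * e); split; last 2 first.
- exact: a_x.
- by rewrite -!mulrA !a_x ytx.
split.
- rewrite !mulrA -(mulrA s e' t) -t_e mulrA -/a /e -exprS -!exprD.
  have -> : (k.+2 + k + k.+1 = k.+1 * 2.+1)%N by lia.
  exact: expr_idem_mul.
- rewrite -!mulrA (mulrA e) -s_e' -mulrA idem_b !mulrA t_ak -(mulrA _ t) -/b /e' -exprSr -exprD.
  have -> : (k.+1 + k.+1 = k.+1 * 1.+1)%N by lia.
  exact: expr_idem_mul.
- by rewrite -mulrA idem_b.
- by rewrite -mulrA idem_a.
Qed.

Definition ann x : {set R} := [set r | r * x == 0].

Definition torsion J M := [set m in M | J \subset ann m].

Definition exact_ann K M := [set m in M | ann m == K].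

Lemma card_torsion J M :
  #|torsion J M| = (\sum_(K : {set R} | J \subset K) #|exact_ann K M|)%N.
Proof.
rewrite -sum1_card (partition_big ann (fun K => J \subset K)) => [|m]; last first.
  by rewrite inE => /andP[].
apply: eq_bigr => K JK; rewrite -sum1_card; apply: eq_bigl => m.
by rewrite !inE; case: (m \in M) => //=; case: (ann m =P K) => [->|_]; rewrite ?JK ?andbF.
Qed.

Lemma card_exact_ann_eq M1 M2 : (forall J, #|torsion J M1| = #|torsion J M2|) ->
  forall K, #|exact_ann K M1| = #|exact_ann K M2|.
Proof.
move=> eq_tors K; have [m] := ubnP #|~: K|; elim: m K => // m IH K lt_K.
have := eq_tors K; rewrite !card_torsion (bigD1 K) //= [RHS](bigD1 K) //=.
rewrite (eq_bigr (fun K' => #|exact_ann K' M2|)) => [|K' /andP[sub_KK' neq_K'K]].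
  by move/eqP; rewrite eqn_add2r => /eqP.
apply: IH; rewrite -ltnS (leq_trans _ lt_K) // ltnS proper_card //.
by rewrite properC properEneq eq_sym neq_K'K.
Qed.

Lemma subset_ann_mulr J x y : J \subset ann x -> J \subset ann (x * y).
Proof.
by move=> /subsetP Jx; apply/subsetP => j /Jx; rewrite !inE mulrA => /eqP->; rewrite mul0r.
Qed.

Lemma card_torsion_idem J e : e * e = e ->
  #|torsion J setT| = (#|torsion J (lprinc e)| * #|torsion J (lprinc (1 - e)%R)|)%N.
Proof.
move=> ee; have ff := idem_subr ee.
have ef : e * (1 - e) = 0 by rewrite mulrBr mulr1 ee subrr.
have fe : (1 - e) * e = 0 by rewrite mulrBl mul1r ee subrr.
rewrite -cardsX -(@card_in_imset _ _ (fun pq : R * R => pq.1 + pq.2)).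
  apply: eq_card => m; rewrite !inE; apply/idP/imsetP => [Jm|[[p q]]].
    exists (m * e, m * (1 - e)); last by rewrite /= -mulrDr addrC subrK mulr1.
    by rewrite !inE !mem_lprinc_idem // -!mulrA ee ff !eqxx !subset_ann_mulr.
  rewrite !inE !mem_lprinc_idem //= => /andP[/andP[/eqP <- Jp] /andP[/eqP <- Jq]] ->.
  apply/subsetP => j jJ; rewrite inE mulrDr.
  move: (subsetP Jp j jJ) (subsetP Jq j jJ); rewrite !inE !mulrA.
  by move=> /eqP-> /eqP->; rewrite addr0.
move=> [p q] [p' q']; rewrite !inE !mem_lprinc_idem //=.
move=> /andP[/andP[/eqP pe _] /andP[/eqP qf _]] /andP[/andP[/eqP pe' _] /andP[/eqP qf' _]] pq.
have eq_p : p = p'.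
  by move/(congr1 ( *%R^~ e)): pq; rewrite /= !mulrDl -qf -qf' -!mulrA fe !mulr0 !addr0 pe pe'.
by move: pq; rewrite eq_p => /addrI->.
Qed.

Lemma leq_card_torsion_mulr J M1 M2 g h :
    {in M1, forall v, v * g \in M2} -> {in M1, forall v, v * g * h = v} ->
  (#|torsion J M1| <= #|torsion J M2|)%N.
Proof.
move=> gM gK; rewrite -(@card_in_imset _ _ ( *%R^~ g)) => [|v w]; last first.
  by rewrite !inE => /andP[vM _] /andP[wM _] /(congr1 ( *%R^~ h)); rewrite /= !gK.
apply/subset_leq_card/subsetP => _ /imsetP[v + ->]; rewrite !inE => /andP[vM Jv].
by rewrite gM //= subset_ann_mulr.
Qed.

Lemma card_torsion_iso_idem J e (e' : R) p q : iso_idem e e' p q ->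
  #|torsion J (lprinc e)| = #|torsion J (lprinc e')|.
Proof.
suff le_iso (f f' p' q' : R) : iso_idem f f' p' q' ->
    (#|torsion J (lprinc f)| <= #|torsion J (lprinc f')|)%N.
  move=> iso; apply/eqP; rewrite eqn_leq (le_iso _ _ _ _ iso).
  exact: le_iso (iso_idem_sym iso).
move=> iso; have [pq _ pf' _] := iso.
have [ff f'f'] := (iso_idem_idem iso, iso_idem_idem (iso_idem_sym iso)).
apply: (@leq_card_torsion_mulr _ _ _ p' q') => v; rewrite mem_lprinc_idem // => /eqP vf.
  by rewrite mem_lprinc_idem // -mulrA pf'.
by rewrite -mulrA pq vf.
Qed.

Lemma exists_ann_complement e (e' : R) : e * e = e -> e' * e' = e' ->
    (forall J, #|torsion J (lprinc e)| = #|torsion J (lprinc e')|) ->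
  exists2 m, m \in lprinc (1 - e) & ann m = ann (1 - e').
Proof.
move=> ee e'e' eq_tors.
have eq_compl J : #|torsion J (lprinc (1 - e))| = #|torsion J (lprinc (1 - e'))|.
  have tors0 : (0 < #|torsion J (lprinc e)|)%N.
    apply/card_gt0P; exists 0; rewrite inE mem_lprinc_idem // mul0r eqxx /=.
    by apply/subsetP => j _; rewrite inE mulr0.
  apply/eqP; rewrite -(eqn_pmul2l tors0) -card_torsion_idem // eq_tors.
  by rewrite (card_torsion_idem _ e'e').
have [m] : exists m, m \in exact_ann (ann (1 - e')) (lprinc (1 - e)).
  apply/card_gt0P; rewrite (card_exact_ann_eq eq_compl); apply/card_gt0P.
  by exists (1 - e'); rewrite !inE eqxx andbT lprinc_id.
by rewrite inE => /andP[m_in /eqP]; exists m.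
Qed.

Lemma unit_iso_idem_add e (e' : R) p q m : iso_idem e e' p q ->
  m * e = 0 -> ann m \subset ann (1 - e') -> q + m \is a GRing.unit.
Proof.
case=> _ qp _ qe me ann_m; apply/rreg_unit/mulIr0_rreg => z zqm.
have zq : z * q = 0.
  move/(congr1 ( *%R^~ e)): zqm.
  by rewrite /= mul0r mulrDr mulrDl -!mulrA qe me mulr0 addr0.
have : z \in ann (1 - e').
  by apply: (subsetP ann_m); rewrite inE -zqm mulrDr zq add0r.
rewrite inE mulrBr mulr1 subr_eq0 => /eqP->.
by rewrite -qp mulrA zq mul0r.
Qed.

Lemma lprinc_eq_unit x y : lprinc x = lprinc y ->
  exists2 u, u \is a GRing.unit & y = u * x.
Proof.
move=> eq_xy.
have [s xsy] : exists s, x = s * y by apply/lprincP; rewrite -eq_xy lprinc_id.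
have [t ytx] : exists t, y = t * x by apply/lprincP; rewrite eq_xy lprinc_id.
have [e [e' [p [q [iso ex qx]]]]] := fitting_iso_idem xsy ytx.
have [ee e'e'] := (iso_idem_idem iso, iso_idem_idem (iso_idem_sym iso)).
have [m m_in ann_m] := exists_ann_complement ee e'e' (fun J => card_torsion_iso_idem J iso).
have mf : m * (1 - e) = m by apply/eqP; rewrite -mem_lprinc_idem // idem_subr.
exists (q + m).
  apply: (unit_iso_idem_add iso); last by rewrite ann_m.
  by rewrite -mf -mulrA mulrBl mul1r ee subrr mulr0.
by rewrite mulrDl qx -mf -mulrA mulrBl mul1r ex subrr mulr0 addr0.
Qed.

End FiniteRing.

Section LineSum.
Variables (R : finUnitRingType) (n : nat).
Implicit Types (a x : 'rV[R]_n) (C : {set 'rV[R]_n}).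

Definition line_sum a C := [set r *: a + c | r in [set: R], c in C].

Lemma lsubmod_line_sum a C : lsubmod C -> lsubmod (line_sum a C).
Proof.
case=> C0 C_add C_scale; split.
- by apply/imset2P; exists 0 0; rewrite ?inE ?scale0r ?addr0.
- move=> _ _ /imset2P[r c _ c_in ->] /imset2P[r' c' _ c'_in ->].
  by apply/imset2P; exists (r + r') (c + c'); rewrite ?inE ?C_add // scalerDl addrACA.
- move=> r _ /imset2P[r' c _ c_in ->].
  by apply/imset2P; exists (r * r') (r *: c); rewrite ?inE ?C_scale // scalerDr scalerA.
Qed.

Variables (P : 'rV[R]_n -> bool) (Gamma : {set R}).
Hypothesis P_mult : left_mult P.
Hypothesis Gamma_gen : forall r : R, r != 0 -> exists2 g, g \in Gamma & lprinc g = lprinc r.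

Lemma line_sum_prop a C : lsubmod C -> {in C, forall x, x != 0 -> P x} ->
    {in Gamma, forall g, {in C, forall c, P (g *: a + c)}} ->
  {in line_sum a C, forall x, x != 0 -> P x}.
Proof.
case=> _ _ C_scale C_P a_ok _ /imset2P[r c _ c_in ->].
have [->|r_neq0] := eqVneq r 0; first by rewrite scale0r add0r; apply: C_P.
have [g g_in /lprinc_eq_unit[u u_unit ->]] := Gamma_gen r_neq0.
have -> : (u * g) *: a + c = u *: (g *: a + u^-1 *: c).
  by rewrite scalerDr !scalerA mulrV // scale1r.
rewrite P_mult // => _.
by apply: a_ok; rewrite ?C_scale.
Qed.

End LineSum.

Theorem mainTheorem6 (R : finUnitRingType) (HR : PLIR R)
  (lt : rel R) (Hlt : strict_total lt) (Hresp : respectful lt)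
  (n : nat) (b : 'I_n -> 'rV[R]_n) (Hb : is_basis b)
  (P : 'rV[R]_n -> bool) (HP : left_mult P)
  (Gamma : {set R})
  (HG0 : 0 \notin Gamma)
  (HG : forall I : {set R}, lideal I -> I != [set 0] ->
          exists! g : R, g \in Gamma /\ I = lprinc g)
  (i : nat) (Hi : (i <= n)%N) :
  lsubmod (greedy b lt P Gamma i) /\
  (forall x, x \in greedy b lt P Gamma i -> x != 0 -> P x).
Proof.
have Gamma_gen r : r != 0 -> exists2 g, g \in Gamma & lprinc g = lprinc r.
  move=> r_neq0; have [|g [[g_in Eg] _]] := HG _ (lprinc_lideal r).
    by apply: contraNneq r_neq0 => r0; have := lprinc_id r; rewrite r0 inE.
  by exists g; rewrite -?Eg.
elim: i {Hi} => [|i [C_sub C_P]] /=.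
  split=> [|x /set1P->]; last by rewrite eqxx.
  by split=> [|x y /set1P-> /set1P->|r x /set1P->]; rewrite ?inE ?addr0 ?scaler0.
case: pickP => [a /andP[+ _] | _]; last by split.
rewrite inE => /and3P[_ _ /forallP a_ok].
split; first exact: lsubmod_line_sum.
apply: (line_sum_prop HP Gamma_gen) => // g g_in c c_in.
by move/(_ g): a_ok; rewrite g_in => /forallP/(_ c); rewrite c_in.
Qed.
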